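(* Fix $p\in\{1,2\}$ and an integer $L\ge 1$. Let $N_0 = N_D+1$ and $\mathcal{D}_0=\mathcal{D}\subset\mathbb{R}^{N_D+1}$ be compact, and for $\ell=1,\dots,L$ let $\mathcal{D}_\ell\subset\mathbb{R}^{N_\ell}$ be compact and let $\mathbf{u}_\ell:\mathcal{D}_\ell\to\mathcal{D}_{\ell-1}$ be continuous and Lipschitz with constant $l_{\mathbf{u}_\ell}$. Define recursively $\mathbf{f}_0(\mathbf{x})=\mathbf{x}$ on $\mathcal{D}$ and $\mathbf{f}_\ell(\mathbf{x}_\ell) = \mathbf{f}_{\ell-1}(\mathbf{u}_\ell(\mathbf{x}_\ell))$ for $\mathbf{x}_\ell\in\mathcal{D}_\ell$, so $\mathbf{f}_\ell:\mathcal{D}_\ell\to\mathcal{D}$, and assume each $\mathbf{f}_\ell$ is Lipschitz with constant $l_{\mathbf{f}_\ell}$ with respect to $\|\cdot\|_p$, i.e. $\|\mathbf{f}_\ell(\mathbf{a})-\mathbf{f}_\ell(\mathbf{b})\|_p\le l_{\mathbf{f}_\ell}\|\mathbf{a}-\mathbf{b}\|_p$, with $l_{\mathbf{f}_0}=1$. Let $\hat{\mathbf{u}}_\ell:\mathcal{D}_\ell\to\mathcal{D}_{\ell-1}$ ($\ell=1,\dots,L$) be arbitrary approximations of $\mathbf{u}_\ell$, and define $\hat{\mathbf{f}}_0(\mathbf{x})=\mathbf{x}$ and $\hat{\mathbf{f}}_\ell(\mathbf{x}_\ell)=\hat{\mathbf{f}}_{\ell-1}(\hat{\mathbf{u}}_\ell(\mathbf{x}_\ell))$.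 For $1\le\ell\le L$ and $\mathbf{x}_\ell\in\mathcal{D}_\ell$, define the approximate intermediate points $\hat{\mathbf{x}}_\ell=\mathbf{x}_\ell$ and $\hat{\mathbf{x}}_{i-1}=\hat{\mathbf{u}}_i(\hat{\mathbf{x}}_i)$ for $i=\ell,\dots,1$, and the layer error vectors $\mathbf{e}_{u,i} = \mathbf{u}_i(\hat{\mathbf{x}}_i)-\hat{\mathbf{u}}_i(\hat{\mathbf{x}}_i)$. Let $\mathbf{e}_{f,\ell}=\mathbf{f}_\ell(\mathbf{x}_\ell)-\hat{\mathbf{f}}_\ell(\mathbf{x}_\ell)$ with components $e_{f,\ell,k}$. Then for every $1\le\ell\le L$, every $\mathbf{x}_\ell\in\mathcal{D}_\ell$ and every component $k$, $$|e_{f,\ell,k}| \le \sum_{i=1}^{\ell} \|\mathbf{e}_{u,i}\|_p\cdot l_{\mathbf{f}_{i-1}} .$$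
   Context: This models a deep network as a composition of layers/function blocks $\mathbf{u}_\ell$, each replaced by an approximation $\hat{\mathbf{u}}_\ell$ (a known layer has $\hat{\mathbf{u}}_\ell=\mathbf{u}_\ell$, hence zero error). The vector $\mathbf{x}\in\mathbb{R}^{N_D+1}$ uses the extended-vector (bias-absorbing) convention. *)

From HB Require Import structures.
From mathcomp Require Import all_boot all_order all_algebra.
From mathcomp Require Import all_classical all_reals all_analysis.
Set Implicit Arguments. Unset Strict Implicit. Unset Printing Implicit Defensive.
Import Order.TTheory GRing.Theory Num.Theory.
Local Open Scope ring_scope.
Local Open Scope classical_set_scope.

Definition pnorm {R : realType} (p : nat) {n : nat} (v : 'rV[R]_n) : R :=
  (\sum_(j < n) `|v ord0 j| ^+ p) `^ (p%:R^-1).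

Definition lipschitz_pnorm_on {R : realType} (p : nat) {m n : nat}
  (A : set 'rV[R]_m) (g : 'rV[R]_m -> 'rV[R]_n) (c : R) : Prop :=
  forall a b, A a -> A b -> pnorm p (g a - g b) <= c * pnorm p (a - b).

(* Composition of layers: f_0 = id, f_(l+1) x = f_l (u_(l+1) x).
   Layer u i maps R^(N i) to R^(N (i-1)) (only i >= 1 is used). *)
Fixpoint compose_layers {R : realType} (N : nat -> nat)
  (u : forall i : nat, 'rV[R]_(N i) -> 'rV[R]_(N i.-1)) (l : nat)
  : 'rV[R]_(N l) -> 'rV[R]_(N 0%N) :=
  match l with
  | 0%N => fun x => x
  | l'.+1 => fun x => @compose_layers R N u l' (u l'.+1 x)
  end.

From HB Require Import structures.
From mathcomp Require Import all_boot all_order all_algebra.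
From mathcomp Require Import all_classical all_reals all_analysis.
From mathcomp Require Import zify.
Import Order.TTheory GRing.Theory Num.Theory.
Import numFieldNormedType.Exports.
Local Open Scope ring_scope.
Local Open Scope classical_set_scope.

(* Along the approximate trajectory x_(i-1) = uh_i x_i we have
   fh_l x = x_0 and f_0 x_0 = x_0, so f_l x - fh_l x telescopes into the sum
   of f_i x_i - f_(i-1) x_(i-1) = f_(i-1) (u_i x_i) - f_(i-1) (uh_i x_i),
   whose p-norm is at most l_(f_(i-1)) ||e_(u,i)||_p. *)

Lemma normr_le_pnorm {R : realType} {n : nat} (p : nat) (v : 'rV[R]_n)
    (k : 'I_n) :
  (0 < p)%N -> `|v ord0 k| <= pnorm p v.
Proof.
move=> p_gt0; have p_neq0 : p%:R != 0 :> R by rewrite pnatr_eq0 -lt0n.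
have -> : `|v ord0 k| = (`|v ord0 k| ^+ p) `^ p%:R^-1.
  by rewrite -powR_mulrn // -powRrM divff // powRr1.
apply: ge0_ler_powR; rewrite ?nnegrE ?invr_ge0 ?ler0n ?exprn_ge0 //.
- by apply: sumr_ge0 => j _; exact: exprn_ge0.
- rewrite (bigD1 k) //= lerDl; apply: sumr_ge0 => j _; exact: exprn_ge0.
Qed.

Lemma normr_entry_telescope {R : numDomainType} {m n : nat}
    (g : nat -> 'M[R]_(m, n)) (l : nat) (i : 'I_m) (j : 'I_n) :
  `|(g l - g 0%N) i j| <= \sum_(0 <= k < l) `|(g k.+1 - g k) i j|.
Proof. by rewrite -telescope_sumr // summxE ler_norm_sum. Qed.

Section ApproximateTrajectory.

Context {R : realType} {N : nat -> nat}.
Context {uh : forall i : nat, 'rV[R]_(N i) -> 'rV[R]_(N i.-1)}.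
Context {l : nat} {xh : forall i : nat, 'rV[R]_(N i)}.
Hypothesis xh_step : forall i, (1 <= i <= l)%N -> xh i.-1 = uh i (xh i).

Lemma compose_layers_trajectory j :
  (j <= l)%N -> compose_layers uh (xh j) = xh 0%N.
Proof.
elim: j => [|j IH] jl //=.
by rewrite -xh_step ?IH ?(ltnW jl) //; apply/andP.
Qed.

Lemma trajectory_mem {D : forall i : nat, set 'rV[R]_(N i)} :
  (forall i, (1 <= i <= l)%N -> forall x, D i x -> D i.-1 (uh i x)) ->
  D l (xh l) -> forall i, (i <= l)%N -> D i (xh i).
Proof.
move=> uhD Dl i /subKn <-.
elim: (l - i)%N (leq_subr i l) => [|m IH] ml; first by rewrite subn0.
rewrite subnS xh_step; last by apply/andP; split; lia.
by apply: uhD; [apply/andP; split; lia | exact: IH (ltnW ml)].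
Qed.

End ApproximateTrajectory.

Theorem theorem4 (R : realType) (p L : nat) (N : nat -> nat)
  (D : forall l : nat, set 'rV[R]_(N l))
  (u uh : forall i : nat, 'rV[R]_(N i) -> 'rV[R]_(N i.-1))
  (lu lf : nat -> R) :
  (p = 1%N \/ p = 2%N) -> (1 <= L)%N ->
  (forall l, (l <= L)%N -> compact (D l)) ->
  (forall l, (1 <= l <= L)%N -> forall x, D l x -> D l.-1 (u l x)) ->
  (forall l, (1 <= l <= L)%N -> {within D l, continuous (u l)}) ->
  (forall l, (1 <= l <= L)%N -> lipschitz_pnorm_on p (D l) (u l) (lu l)) ->
  (forall l, (l <= L)%N -> lipschitz_pnorm_on p (D l) (@compose_layers R N u l) (lf l)) ->
  lf 0%N = 1 ->
  (forall l, (1 <= l <= L)%N -> forall x, D l x -> D l.-1 (uh l x)) ->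
  forall (l : nat), (1 <= l <= L)%N ->
  forall (x : 'rV[R]_(N l)), D l x ->
  forall (xh : forall i : nat, 'rV[R]_(N i)),
    xh l = x ->
    (forall i, (1 <= i <= l)%N -> xh i.-1 = uh i (xh i)) ->
  forall k : 'I_(N 0%N),
    `|(@compose_layers R N u l x - @compose_layers R N uh l x) ord0 k|
      <= \sum_(1 <= i < l.+1) pnorm p (u i (xh i) - uh i (xh i)) * lf i.-1.
Proof.
(* lf 0 = 1 is unused: the layer i = 1 uses the Lipschitz hypothesis on f_0. *)
move=> p12 _ _ uD _ _ f_lip _ uhD l /andP[_ lL] x Dx xh xh_l xh_step k.
have p_gt0 : (0 < p)%N by case: p12 => ->.
have uhD_l i : (1 <= i <= l)%N -> forall y, D i y -> D i.-1 (uh i y).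
  by move=> /andP[i_gt0 il]; apply: uhD; apply/andP; split; lia.
have Dxh : forall i, (i <= l)%N -> D i (xh i).
  by apply: (trajectory_mem xh_step uhD_l); rewrite xh_l.
rewrite -xh_l (compose_layers_trajectory xh_step _ (leqnn l)).
pose g i := compose_layers u (xh i).
rewrite -/(g l) -[xh 0%N]/(g 0%N).
apply: le_trans (normr_entry_telescope g l ord0 k) _.
rewrite big_add1 /=; apply: ler_sum_nat => i /andP[_ il].
apply: le_trans (normr_le_pnorm p _ k p_gt0) _.
rewrite mulrC /g /= (xh_step i.+1) //; apply: f_lip; first lia.
- by apply: (uD i.+1); [exact: leq_trans il lL | exact: Dxh].
- by apply: (uhD_l i.+1); [exact: il | exact: Dxh].
Qed.
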